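(* There is an absolute constant $C>0$ such that the following holds. Let $R>0$ and let $r\ge 1$ be an integer; set $d=r$. Let $\Omega_1=(-1-d,\,R+d)$, let $\chi_{\Omega_1}$ be its indicator function, let $\eta_d(p)=d^{-1}\eta(p/d)$, and define the cut-off function $\zeta=\eta_d*\chi_{\Omega_1}$, i.e. $\zeta(p)=\int_{\mathbb{R}}\eta_d(p-y)\chi_{\Omega_1}(y)\,\mathrm{d}y$. Define $\psi(p)=\zeta(p)\mathrm{e}^{-p}$. Then $\psi\in C^\infty(\mathbb{R})$, $\operatorname{supp}\psi\subset[-(1+2r),\,R+2r]$, $\psi(p)=\mathrm{e}^{-p}$ for $p\in(-1,R)$, and \[ \|\psi^{(r)}\|_{L^2(\mathbb{R})}^{1/r}\le C\, r^2 . \] In particular, choosing $r\simeq\log(1/\epsilon)$ gives $\|\psi^{(r)}\|_{L^2(\mathbb{R})}^{1/r}\lesssim \log^2(1/\epsilon)$.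
   Context: $\eta$ is the mollifier $\eta(p)=C_\eta^{-1}\exp(1/(p^2-1))$ for $|p|<1$ and $\eta(p)=0$ for $|p|\ge1$, with $C_\eta=\int_{-1}^1\exp(1/(p^2-1))\,\mathrm{d}p$. $\psi^{(r)}$ is the $r$-th derivative of $\psi$. *)

From Stdlib Require Import Reals.
From Coquelicot Require Import Coquelicot.
Open Scope R_scope.

Definition C_eta : R := RInt (fun p => exp (1 / (p ^ 2 - 1))) (-1) 1.

Definition eta (p : R) : R :=
  if Rlt_dec (Rabs p) 1 then / C_eta * exp (1 / (p ^ 2 - 1)) else 0.

Definition eta_d (d p : R) : R := / d * eta (p / d).

Definition chi_Omega1 (Rr d y : R) : R :=
  if Rlt_dec (-1 - d) y then (if Rlt_dec y (Rr + d) then 1 else 0) else 0.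

(* zeta = eta_d * chi_{Omega_1}; since chi vanishes outside the bounded
   interval Omega_1, the integral over R is the Riemann integral over its closure. *)
Definition zeta (Rr d p : R) : R :=
  RInt (fun y => eta_d d (p - y) * chi_Omega1 Rr d y) (-1 - d) (Rr + d).

Definition psi (Rr d p : R) : R := zeta Rr d p * exp (- p).

From Stdlib Require Import Reals Lra Lia List.
From Coquelicot Require Import Coquelicot.
Open Scope R_scope.

(* The bump [exp (1 / (x^2 - 1))] equals [flat 0 (1 - x) * flat 0 (1 + x)], where
   [flat m t = exp (- 1 / (2 t)) t^(-m)] satisfies [flat m' = - m flat (m+1) + flat (m+2) / 2].
   Hence its [k]-th derivative is a combination of products [flat m (1 - x) * flat j (1 + x)]
   with [m + j <= 2k] and coefficients of total size at most [(2k+1)^k]; since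
   [flat m <= (2m)^m], it is bounded by [(4k+2)^(3k)].  As [zeta] is the difference of two
   translates of the primitive of [eta_d], its [k]-th derivative is a difference of translates
   of [eta_d^(k-1) = d^(-k) eta^(k-1) (. / d)], which is [O((216 r^2)^r)] when [d = r >= k].
   The Leibniz rule against [e^(-p)] costs [2^r], and on the support [[-(1+2r), R+2r]] of [psi]
   we have [e^(-p) <= e^(1+2r) <= 3 * 9^r]; integrating [e^(-2p)] then gives
   [||psi^(r)||_2 <= 54 (3888 r^2)^r <= (54 * 3888 * r^2)^r]. *)

Definition derivative_chain (F : nat -> R -> R) : Prop :=
  forall n x, is_derive (F n) x (F (S n) x).

Section DerivativeChain.

Variable F : nat -> R -> R.
Hypothesis HF : derivative_chain F.

Lemma Derive_n_chain (f : R -> R) :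
  (forall x, f x = F 0%nat x) -> forall n x, Derive_n f n x = F n x.
Proof.
  intros Hf n; induction n as [|n IH]; intros x; [apply Hf|].
  simpl; rewrite (Derive_ext _ (F n) x IH). apply is_derive_unique, HF.
Qed.

Lemma ex_derive_n_chain (f : R -> R) :
  (forall x, f x = F 0%nat x) -> forall n x, ex_derive_n f n x.
Proof.
  intros Hf [|n] x; [exact I|].
  apply ex_derive_ext with (F n); [intros t; symmetry; apply Derive_n_chain, Hf|].
  eexists; apply HF.
Qed.

Lemma continuous_chain n x : continuous (F n) x.
Proof. apply (ex_derive_continuous (F n)). eexists; apply HF. Qed.

End DerivativeChain.

(* [fdiff n F] is the [n]-th forward difference of the sequence [F] at index 0,
   i.e. [\sum_k binom(n,k) (-1)^(n-k) F k]; by Leibniz, if [F] is the chain of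
   derivatives of [g] then [fdiff n F * exp (- x)] is the [n]-th derivative of [g * exp (- x)]. *)
Fixpoint fdiff (n : nat) (F : nat -> R -> R) : R -> R :=
  match n with
  | O => F O
  | S n' => fun x => fdiff n' (fun k => F (S k)) x - fdiff n' F x
  end.

Lemma is_derive_fdiff n : forall F, derivative_chain F -> forall x,
  is_derive (fdiff n F) x (fdiff n (fun k => F (S k)) x).
Proof.
  induction n as [|n IH]; intros F HF x; simpl; [apply HF|].
  assert (HF' : derivative_chain (fun k => F (S k))) by (intros k y; apply HF).
  apply (is_derive_minus (fdiff n (fun k => F (S k))) (fdiff n F)); apply IH; assumption.
Qed.

Lemma fdiff_bound n : forall F B, (forall k x, (k <= n)%nat -> Rabs (F k x) <= B) ->
  forall x, Rabs (fdiff n F x) <= 2 ^ n * B.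
Proof.
  induction n as [|n IH]; intros F B HB x; simpl.
  - rewrite Rmult_1_l. apply HB; lia.
  - eapply Rle_trans; [apply Rabs_triang|]. rewrite Rabs_Ropp.
    assert (H1 : Rabs (fdiff n (fun k => F (S k)) x) <= 2 ^ n * B)
      by (apply IH; intros; apply HB; lia).
    assert (H2 : Rabs (fdiff n F x) <= 2 ^ n * B) by (apply IH; intros; apply HB; lia).
    lra.
Qed.

Lemma fdiff_zero n : forall F x, (forall k, F k x = 0) -> fdiff n F x = 0.
Proof. induction n as [|n IH]; intros F x H; simpl; [apply H|]. rewrite !IH; auto; ring. Qed.

Lemma derivative_chain_mult_exp_neg F : derivative_chain F ->
  derivative_chain (fun n x => fdiff n F x * exp (- x)).
Proof.
  intros HF n x.
  replace (fdiff (S n) F x * exp (- x))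
    with (fdiff n (fun k => F (S k)) x * exp (- x) + fdiff n F x * (- exp (- x))) by (simpl; ring).
  apply (is_derive_mult (fdiff n F) (fun x => exp (- x))).
  - apply is_derive_fdiff, HF.
  - auto_derive; auto; ring.
  - intros; apply Rmult_comm.
Qed.

Lemma is_derive_0_of_sq_bound (f : R -> R) (C : R) : 0 < C -> f 0 = 0 ->
  (forall h, Rabs (f h) <= C * h ^ 2) -> is_derive f 0 0.
Proof.
  intros HC H0 Hf. apply is_derive_Reals. intros eps Heps.
  assert (Hd : 0 < eps / C) by (apply Rdiv_lt_0_compat; lra).
  exists (mkposreal _ Hd). intros h Hh0 Hh. simpl in Hh.
  rewrite Rplus_0_l, H0, !Rminus_0_r, Rabs_div by exact Hh0.
  assert (Hh1 : 0 < Rabs h) by (apply Rabs_pos_lt, Hh0).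
  apply Rle_lt_trans with (C * Rabs h).
  - apply Rmult_le_reg_r with (Rabs h); [exact Hh1|]. unfold Rdiv.
    rewrite Rmult_assoc, Rinv_l, Rmult_1_r by lra.
    replace (C * Rabs h * Rabs h) with (C * h ^ 2) by (rewrite <- pow2_abs; ring).
    apply Hf.
  - apply Rlt_le_trans with (C * (eps / C)); [apply Rmult_lt_compat_l; lra|].
    right; field; lra.
Qed.

Lemma exp_le_compat x y : x <= y -> exp x <= exp y.
Proof. intros [H|<-]; [left; apply exp_increasing, H | right; reflexivity]. Qed.

Lemma exp_pow (x : R) (n : nat) : exp x ^ n = exp (INR n * x).
Proof.
  induction n as [|n IH]; [simpl; rewrite Rmult_0_l, exp_0; ring|].
  rewrite S_INR; simpl; rewrite IH, <- exp_plus; f_equal; ring.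
Qed.

(* From [u / m <= exp (u / m - 1)] raised to the power [m]. *)
Lemma pow_le_exp (m : nat) (u : R) : 0 <= u -> u ^ m <= INR m ^ m * exp u.
Proof.
  intros Hu. destruct m as [|m]; [simpl; pose proof (exp_ineq1_le u); lra|].
  set (n := INR (S m)). assert (Hn : 0 < n) by (apply lt_0_INR; lia).
  assert (H1 : (u / n) ^ S m <= exp (u / n - 1) ^ S m).
  { apply pow_incr; split; [apply Rdiv_le_0_compat; lra|].
    pose proof (exp_ineq1_le (u / n - 1)); lra. }
  rewrite exp_pow in H1. fold n in H1.
  assert (H2 : exp (n * (u / n - 1)) <= exp u).
  { apply exp_le_compat. field_simplify; lra. }
  replace (u ^ S m) with (n ^ S m * (u / n) ^ S m)
    by (unfold Rdiv; rewrite <- Rpow_mult_distr; f_equal; field; lra).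
  apply Rmult_le_compat_l; [left; apply pow_lt; lra|]. lra.
Qed.

Definition flat (m : nat) (t : R) : R :=
  if Rlt_dec 0 t then exp (- / (2 * t)) * (/ t) ^ m else 0.

Lemma flat_pos m t : 0 < t -> flat m t = exp (- / (2 * t)) * (/ t) ^ m.
Proof. intros; unfold flat; destruct Rlt_dec; lra. Qed.

Lemma flat_nonpos m t : t <= 0 -> flat m t = 0.
Proof. intros; unfold flat; destruct Rlt_dec; lra. Qed.

Lemma flat_ge0 m t : 0 <= flat m t.
Proof.
  unfold flat; destruct Rlt_dec; [|lra].
  apply Rmult_le_pos; [left; apply exp_pos|].
  apply pow_le; left; apply Rinv_0_lt_compat; lra.
Qed.

Lemma flat_le m t : flat m t <= (2 * INR m) ^ m.
Proof.
  destruct (Rlt_dec 0 t) as [Ht|Ht].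
  2: { rewrite flat_nonpos by lra. apply pow_le. pose proof (pos_INR m); lra. }
  rewrite flat_pos by lra. set (u := / (2 * t)).
  assert (Hu : 0 < u) by (apply Rinv_0_lt_compat; lra).
  replace (/ t) with (2 * u) by (unfold u; field; lra).
  assert (H : exp (- u) * u ^ m <= INR m ^ m).
  { apply Rle_trans with (exp (- u) * (INR m ^ m * exp u)).
    - apply Rmult_le_compat_l; [left; apply exp_pos | apply pow_le_exp; lra].
    - right. rewrite (Rmult_comm (INR m ^ m)), <- Rmult_assoc, <- exp_plus,
        Rplus_opp_l, exp_0; ring. }
  rewrite !Rpow_mult_distr.
  replace (exp (- u) * (2 ^ m * u ^ m)) with (2 ^ m * (exp (- u) * u ^ m)) by ring.
  apply Rmult_le_compat_l; [apply pow_le; lra | exact H].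
Qed.

Lemma flat_succ m t : flat m t = t * flat (S m) t.
Proof.
  destruct (Rlt_dec 0 t) as [Ht|Ht]; [|rewrite !flat_nonpos by lra; ring].
  rewrite !flat_pos by lra. simpl. field. lra.
Qed.

Lemma flat_le_sq m t : Rabs (flat m t) <= (2 * INR (S (S m))) ^ S (S m) * t ^ 2.
Proof.
  rewrite flat_succ, flat_succ, Rabs_right.
  2: { destruct (Rlt_dec 0 t); [|rewrite (flat_nonpos _ t); lra].
       pose proof (flat_ge0 (S (S m)) t). apply Rle_ge, Rmult_le_pos; [lra|].
       apply Rmult_le_pos; lra. }
  pose proof (flat_le (S (S m)) t). pose proof (flat_ge0 (S (S m)) t).
  destruct (Rlt_dec 0 t); [nra|].
  rewrite (flat_nonpos _ t) by lra. rewrite !Rmult_0_r.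
  apply Rmult_le_pos; [lra | apply pow2_ge_0].
Qed.

Lemma is_derive_flat m t :
  is_derive (flat m) t (- INR m * flat (S m) t + / 2 * flat (S (S m)) t).
Proof.
  destruct (Rtotal_order t 0) as [Ht|[->|Ht]].
  - rewrite !flat_nonpos by lra. replace (- INR m * 0 + / 2 * 0) with 0 by ring.
    apply is_derive_ext_loc with (fun _ => 0); [|auto_derive; auto].
    apply locally_interval with m_infty 0; simpl; auto.
    intros y _ Hy. rewrite flat_nonpos by lra. reflexivity.
  - rewrite !flat_nonpos by lra. replace (- INR m * 0 + / 2 * 0) with 0 by ring.
    apply is_derive_0_of_sq_bound with ((2 * INR (S (S m))) ^ S (S m)).
    + apply pow_lt. pose proof (pos_INR (S m)). rewrite S_INR. lra.
    + apply flat_nonpos; lra.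
    + apply flat_le_sq.
  - rewrite !flat_pos by lra.
    apply is_derive_ext_loc with (fun t => exp (- / (2 * t)) * (/ t) ^ m).
    + apply locally_interval with 0 p_infty; simpl; auto.
      intros y Hy _. rewrite flat_pos by lra. reflexivity.
    + auto_derive; [lra|]. destruct m as [|k]; simpl pred; [simpl; field; lra|].
      rewrite S_INR; simpl; field; lra.
Qed.

(* A term [(c, m, j)] stands for the function [c * flat m (1 - x) * flat j (1 + x)]. *)
Definition term := (R * nat * nat)%type.

Fixpoint eval_terms (L : list term) (x : R) : R :=
  match L with
  | nil => 0
  | (c, m, j) :: L' => c * flat m (1 - x) * flat j (1 + x) + eval_terms L' x
  end.

Fixpoint derive_terms (L : list term) : list term :=
  match L with
  | nil => nil
  | (c, m, j) :: L' =>
      (c * INR m, S m, j) :: (- c / 2, S (S m), j) :: (- c * INR j, m, S j)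
        :: (c / 2, m, S (S j)) :: derive_terms L'
  end.

Fixpoint weight (L : list term) : R :=
  match L with nil => 0 | (c, _, _) :: L' => Rabs c + weight L' end.

Definition degree_le (K : nat) (L : list term) : Prop :=
  List.Forall (fun t : term => let '(_, m, j) := t in (m + j <= K)%nat) L.

Lemma is_derive_flat_1_minus m x : is_derive (fun x => flat m (1 - x)) x
  (INR m * flat (S m) (1 - x) - / 2 * flat (S (S m)) (1 - x)).
Proof.
  replace (INR m * flat (S m) (1 - x) - / 2 * flat (S (S m)) (1 - x))
    with (-1 * (- INR m * flat (S m) (1 - x) + / 2 * flat (S (S m)) (1 - x))) by ring.
  apply (is_derive_comp (flat m) (fun x => 1 - x)); [apply is_derive_flat|].
  auto_derive; auto; ring.
Qed.

Lemma is_derive_flat_1_plus m x : is_derive (fun x => flat m (1 + x)) x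
  (- INR m * flat (S m) (1 + x) + / 2 * flat (S (S m)) (1 + x)).
Proof.
  rewrite <- (Rmult_1_l (_ + _)).
  apply (is_derive_comp (flat m) (fun x => 1 + x)); [apply is_derive_flat|].
  auto_derive; auto; ring.
Qed.

Lemma is_derive_eval_terms L x : is_derive (eval_terms L) x (eval_terms (derive_terms L) x).
Proof.
  induction L as [|[[c m] j] L IH]; simpl; [auto_derive; auto|].
  match goal with |- is_derive _ _ ?l => replace l with
    (c * (INR m * flat (S m) (1 - x) - / 2 * flat (S (S m)) (1 - x)) * flat j (1 + x)
     + c * flat m (1 - x) * (- INR j * flat (S j) (1 + x) + / 2 * flat (S (S j)) (1 + x))
     + eval_terms (derive_terms L) x) by field end.
  apply (is_derive_plus (fun x => c * flat m (1 - x) * flat j (1 + x)) (eval_terms L)); [|exact IH].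
  apply (is_derive_mult (fun x => c * flat m (1 - x)) (fun x => flat j (1 + x))).
  - apply is_derive_scal, is_derive_flat_1_minus.
  - apply is_derive_flat_1_plus.
  - intros; apply Rmult_comm.
Qed.

Lemma weight_ge0 L : 0 <= weight L.
Proof. induction L as [|[[c m] j] L IH]; simpl; [lra|]. pose proof (Rabs_pos c); lra. Qed.

Lemma degree_le_derive_terms K L : degree_le K L -> degree_le (S (S K)) (derive_terms L).
Proof.
  unfold degree_le. induction 1 as [|[[c m] j] L Hx HL IH]; simpl; [constructor|].
  do 4 (apply List.Forall_cons; [lia|]). exact IH.
Qed.

Lemma weight_derive_terms K L : degree_le K L -> weight (derive_terms L) <= (INR K + 1) * weight L.
Proof.
  unfold degree_le. induction 1 as [|[[c m] j] L Hx HL IH]; simpl; [lra|].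
  assert (Hmj : INR m + INR j <= INR K) by (rewrite <- plus_INR; apply le_INR, Hx).
  pose proof (pos_INR m). pose proof (pos_INR j). pose proof (Rabs_pos c).
  unfold Rdiv. rewrite !Rabs_mult, !Rabs_Ropp.
  rewrite (Rabs_right (INR m)), (Rabs_right (INR j)), (Rabs_right (/ 2)) by lra.
  nra.
Qed.

Lemma eval_terms_bound K L x : degree_le K L ->
  Rabs (eval_terms L x) <= weight L * (2 * INR K + 2) ^ K.
Proof.
  assert (HK : 1 <= 2 * INR K + 2) by (pose proof (pos_INR K); lra).
  assert (Hflat : forall k t, (k <= K)%nat -> flat k t <= (2 * INR K + 2) ^ k).
  { intros k t Hk. eapply Rle_trans; [apply flat_le|]. apply pow_incr.
    apply le_INR in Hk. pose proof (pos_INR k). lra. }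
  unfold degree_le. induction 1 as [|[[c m] j] L Hx HL IH]; simpl; [rewrite Rabs_R0; lra|].
  eapply Rle_trans; [apply Rabs_triang|].
  rewrite Rmult_plus_distr_r. apply Rplus_le_compat; [|exact IH].
  rewrite !Rabs_mult, Rmult_assoc. apply Rmult_le_compat_l; [apply Rabs_pos|].
  rewrite !Rabs_right by (apply Rle_ge, flat_ge0).
  eapply Rle_trans; [apply Rmult_le_compat; try apply flat_ge0; apply Hflat; lia|].
  rewrite <- pow_add. apply Rle_pow; [exact HK | exact Hx].
Qed.

Lemma eval_terms_out L x : 1 <= Rabs x -> eval_terms L x = 0.
Proof.
  intros Hx. induction L as [|[[c m] j] L IH]; simpl; [reflexivity|]. rewrite IH.
  destruct (Rle_dec 0 x).
  - rewrite Rabs_right in Hx by lra. rewrite (flat_nonpos m) by lra. ring.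
  - rewrite Rabs_left in Hx by lra. rewrite (flat_nonpos j) by lra. ring.
Qed.

Fixpoint bump_terms (n : nat) : list term :=
  match n with O => (1, O, O) :: nil | S n' => derive_terms (bump_terms n') end.

Definition bump_deriv (n : nat) : R -> R := eval_terms (bump_terms n).

Lemma bump_deriv_chain : derivative_chain bump_deriv.
Proof. intros n x; apply is_derive_eval_terms. Qed.

Lemma degree_bump_terms n : degree_le (2 * n) (bump_terms n).
Proof.
  induction n as [|n IH]; simpl; [repeat constructor|].
  replace (S (n + S (n + 0)))%nat with (S (S (2 * n))) by lia.
  apply degree_le_derive_terms, IH.
Qed.

Lemma weight_bump_terms n : weight (bump_terms n) <= (2 * INR n + 1) ^ n.
Proof.
  induction n as [|n IH]; simpl bump_terms; [simpl; rewrite Rabs_R1; lra|].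
  eapply Rle_trans; [apply weight_derive_terms, degree_bump_terms|].
  rewrite mult_INR; change (INR 2) with 2; rewrite S_INR, <- tech_pow_Rmult.
  pose proof (pos_INR n). pose proof (weight_ge0 (bump_terms n)).
  apply Rmult_le_compat; [lra | lra | lra |].
  eapply Rle_trans; [exact IH|]. apply pow_incr; lra.
Qed.

Lemma bump_deriv_bound n x : Rabs (bump_deriv n x) <= (4 * INR n + 2) ^ (3 * n).
Proof.
  unfold bump_deriv. eapply Rle_trans; [apply eval_terms_bound, degree_bump_terms|].
  rewrite mult_INR; change (INR 2) with 2.
  replace (3 * n)%nat with (n + 2 * n)%nat by lia. rewrite pow_add.
  replace (2 * (2 * INR n) + 2) with (4 * INR n + 2) by ring.
  pose proof (pos_INR n).
  apply Rmult_le_compat_r; [apply pow_le; lra|].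
  eapply Rle_trans; [apply weight_bump_terms|]. apply pow_incr; lra.
Qed.

Lemma bump_deriv_out n x : 1 <= Rabs x -> bump_deriv n x = 0.
Proof. apply eval_terms_out. Qed.

Lemma bump_deriv_0_in x : -1 < x < 1 -> bump_deriv 0 x = exp (1 / (x ^ 2 - 1)).
Proof.
  intros Hx. unfold bump_deriv; simpl. rewrite !flat_pos by lra.
  simpl. rewrite Rmult_1_l, !Rmult_1_r, Rplus_0_r, <- exp_plus. f_equal.
  field. repeat split; try lra; nra.
Qed.

Lemma bump_deriv_0_ge0 x : 0 <= bump_deriv 0 x.
Proof.
  unfold bump_deriv; simpl. pose proof (flat_ge0 0 (1 - x)). pose proof (flat_ge0 0 (1 + x)).
  nra.
Qed.

Lemma ex_RInt_of_continuous (f : R -> R) a b : (forall x, continuous f x) -> ex_RInt f a b.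
Proof. intros H. apply (ex_RInt_continuous (V := R_CompleteNormedModule)). intros; apply H. Qed.

Lemma C_eta_eq : C_eta = RInt (bump_deriv 0) (-1) 1.
Proof.
  apply RInt_ext. intros x Hx. rewrite Rmin_left, Rmax_right in Hx by lra.
  symmetry; apply bump_deriv_0_in; lra.
Qed.

Lemma exp_2_le : exp 2 <= 9.
Proof.
  replace 2 with (1 + 1) by ring. rewrite exp_plus.
  pose proof exp_le_3. pose proof (exp_pos 1). nra.
Qed.

(* On [-1/2, 1/2] the bump is at least [exp (- 4 / 3) >= exp (-2) >= 1 / 9]. *)
Lemma C_eta_ge : / 9 <= C_eta.
Proof.
  rewrite C_eta_eq.
  assert (Hex : forall a b, ex_RInt (bump_deriv 0) a b)
    by (intros; apply ex_RInt_of_continuous, continuous_chain, bump_deriv_chain).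
  assert (Hpos : forall a b, a <= b -> 0 <= RInt (bump_deriv 0) a b)
    by (intros; apply RInt_ge_0; auto; intros; apply bump_deriv_0_ge0).
  rewrite <- (RInt_Chasles _ (-1) (- / 2) 1), <- (RInt_Chasles _ (- / 2) (/ 2) 1) by auto.
  assert (Hmid : / 9 <= RInt (bump_deriv 0) (- / 2) (/ 2)).
  { replace (/ 9) with (RInt (fun _ => / 9) (- / 2) (/ 2))
      by (rewrite RInt_const; unfold scal; simpl; unfold mult; simpl; field).
    apply RInt_le; auto; [lra | apply ex_RInt_const |].
    intros x Hx. rewrite bump_deriv_0_in by lra.
    apply Rle_trans with (/ exp 2);
      [apply Rinv_le_contravar; [apply exp_pos | apply exp_2_le]|].
    rewrite <- exp_Ropp. apply exp_le_compat.
    assert (Hx2 : 0 <= x ^ 2 < / 4) by (simpl; split; nra).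
    unfold Rdiv. rewrite Rmult_1_l.
    apply Rmult_le_reg_r with (1 - x ^ 2); [lra|].
    replace (/ (x ^ 2 - 1) * (1 - x ^ 2)) with (-1) by (field; lra). lra. }
  pose proof (Hpos (-1) (- / 2) ltac:(lra)). pose proof (Hpos (/ 2) 1 ltac:(lra)).
  unfold plus; simpl. lra.
Qed.

Lemma C_eta_pos : 0 < C_eta.
Proof. pose proof C_eta_ge. lra. Qed.

Definition eta_deriv (k : nat) (x : R) : R := / C_eta * bump_deriv k x.

Definition eta_d_deriv (d : R) (k : nat) (s : R) : R := (/ d) ^ S k * eta_deriv k (s / d).

Lemma eta_eq x : eta x = eta_deriv 0 x.
Proof.
  unfold eta, eta_deriv. destruct Rlt_dec as [H|H].
  - rewrite bump_deriv_0_in; [reflexivity|]. apply Rabs_def2 in H. lra.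
  - rewrite bump_deriv_out by lra. ring.
Qed.

Lemma eta_d_eq d s : eta_d d s = eta_d_deriv d 0 s.
Proof. unfold eta_d, eta_d_deriv. rewrite eta_eq. simpl. ring. Qed.

Lemma eta_d_deriv_chain d : d <> 0 -> derivative_chain (eta_d_deriv d).
Proof.
  intros Hd n x. unfold eta_d_deriv.
  replace ((/ d) ^ S (S n) * eta_deriv (S n) (x / d))
    with ((/ d) ^ S n * (/ d * eta_deriv (S n) (x / d))) by (simpl; ring).
  apply is_derive_scal.
  apply (is_derive_comp (eta_deriv n) (fun s => s / d)).
  - apply is_derive_scal, bump_deriv_chain.
  - auto_derive; [auto | field; auto].
Qed.

Lemma continuous_eta_d d x : d <> 0 -> continuous (eta_d d) x.
Proof.
  intros Hd. apply continuous_ext with (eta_d_deriv d 0); [intros; symmetry; apply eta_d_eq|].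
  apply continuous_chain, eta_d_deriv_chain, Hd.
Qed.

Lemma ex_RInt_eta_d d a b : d <> 0 -> ex_RInt (eta_d d) a b.
Proof. intros; apply ex_RInt_of_continuous; intros; apply continuous_eta_d; auto. Qed.

Lemma eta_d_deriv_out d k s : 0 < d -> d <= Rabs s -> eta_d_deriv d k s = 0.
Proof.
  intros Hd Hs. unfold eta_d_deriv, eta_deriv. rewrite bump_deriv_out; [ring|].
  unfold Rdiv. rewrite Rabs_mult, Rabs_inv, (Rabs_right d) by lra.
  apply Rmult_le_reg_r with d; [exact Hd|]. rewrite Rmult_assoc, Rinv_l by lra. lra.
Qed.

Lemma eta_d_out d s : 0 < d -> d <= Rabs s -> eta_d d s = 0.
Proof. intros; rewrite eta_d_eq; apply eta_d_deriv_out; auto. Qed.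

Lemma eta_d_ge0 d s : 0 < d -> 0 <= eta_d d s.
Proof.
  intros Hd. rewrite eta_d_eq. unfold eta_d_deriv, eta_deriv.
  pose proof C_eta_pos. pose proof (bump_deriv_0_ge0 (s / d)).
  apply Rmult_le_pos; [apply pow_le; left; apply Rinv_0_lt_compat; lra|].
  apply Rmult_le_pos; [left; apply Rinv_0_lt_compat; lra | assumption].
Qed.

Lemma eta_d_deriv_bound d k s : 0 < d ->
  Rabs (eta_d_deriv d k s) <= 9 * (/ d) ^ S k * (4 * INR k + 2) ^ (3 * k).
Proof.
  intros Hd. unfold eta_d_deriv, eta_deriv.
  pose proof C_eta_ge. pose proof C_eta_pos.
  assert (HC : 0 < / C_eta <= 9) by (split; [apply Rinv_0_lt_compat; lra|];
    rewrite <- (Rinv_inv 9); apply Rinv_le_contravar; lra).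
  assert (Hp : 0 < (/ d) ^ S k) by (apply pow_lt, Rinv_0_lt_compat, Hd).
  rewrite !Rabs_mult, (Rabs_right ((/ d) ^ S k)), (Rabs_right (/ C_eta)) by lra.
  pose proof (bump_deriv_bound k (s / d)). pose proof (Rabs_pos (bump_deriv k (s / d))).
  replace (9 * (/ d) ^ S k * (4 * INR k + 2) ^ (3 * k))
    with ((/ d) ^ S k * (9 * (4 * INR k + 2) ^ (3 * k))) by ring.
  apply Rmult_le_compat_l; [lra|].
  apply Rmult_le_compat; lra.
Qed.

(* Taking [d >= k + 1] turns [d^(-k-1) (4k+2)^(3k)] into [O(d^(2k))], whence the [r^2]. *)
Lemma eta_d_deriv_le d k s : 1 <= d -> INR k + 1 <= d ->
  Rabs (eta_d_deriv d k s) <= 9 * (216 * d ^ 2) ^ k.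
Proof.
  intros Hd Hk. eapply Rle_trans; [apply eta_d_deriv_bound; lra|].
  pose proof (pos_INR k).
  assert (Hi : 0 < / d <= 1) by (split; [apply Rinv_0_lt_compat; lra|];
    rewrite <- Rinv_1; apply Rinv_le_contravar; lra).
  assert (H1 : (/ d) ^ S k <= (/ d) ^ k).
  { simpl. rewrite <- (Rmult_1_l ((/ d) ^ k)) at 2.
    apply Rmult_le_compat_r; [apply pow_le|]; lra. }
  assert (H2 : (4 * INR k + 2) ^ (3 * k) <= (6 * d) ^ (3 * k)) by (apply pow_incr; lra).
  assert (H3 : (/ d) ^ k * (6 * d) ^ (3 * k) = (216 * d ^ 2) ^ k).
  { rewrite pow_mult, <- Rpow_mult_distr. f_equal. field. lra. }
  rewrite <- H3, Rmult_assoc.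
  apply Rmult_le_compat_l; [lra|].
  apply Rmult_le_compat; try (apply pow_le; lra); assumption.
Qed.

Lemma RInt_eq_0 (f : R -> R) a b :
  (forall x, Rmin a b < x < Rmax a b -> f x = 0) -> RInt f a b = 0.
Proof.
  intros H. rewrite (RInt_ext f (fun _ => 0)) by exact H. rewrite RInt_const.
  unfold scal; simpl; unfold mult; simpl. ring.
Qed.

Definition eta_cdf (d t : R) : R := RInt (eta_d d) (- d) t.

Section Cutoff.

Variable d : R.
Hypothesis Hd : 0 < d.

Lemma is_derive_eta_cdf t : is_derive (eta_cdf d) t (eta_d d t).
Proof.
  apply (is_derive_RInt (eta_d d) (eta_cdf d) (- d) t).
  - apply filter_forall. intros b.
    apply (RInt_correct (V := R_CompleteNormedModule)), ex_RInt_eta_d; lra.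
  - apply continuous_eta_d; lra.
Qed.

Lemma eta_cdf_Chasles s t : eta_cdf d t = eta_cdf d s + RInt (eta_d d) s t.
Proof.
  unfold eta_cdf. rewrite <- (RInt_Chasles _ (- d) s t); try apply ex_RInt_eta_d; try lra.
  reflexivity.
Qed.

Lemma eta_cdf_left t : t <= - d -> eta_cdf d t = 0.
Proof.
  intros Ht. apply RInt_eq_0. intros x Hx. rewrite Rmin_right, Rmax_left in Hx by lra.
  apply eta_d_out; [exact Hd|]. rewrite Rabs_left; lra.
Qed.

(* The substitution [y = d x] reduces the total mass of [eta_d] to that of [eta]. *)
Lemma eta_cdf_d : eta_cdf d d = 1.
Proof.
  unfold eta_cdf.
  assert (H := RInt_comp_lin (eta_d d) d 0 (-1) 1 (ex_RInt_eta_d d _ _ ltac:(lra))).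
  replace (d * -1 + 0) with (- d) in H by ring. replace (d * 1 + 0) with d in H by ring.
  rewrite <- H, (RInt_ext _ (fun y => scal (/ C_eta) (exp (1 / (y ^ 2 - 1))))).
  - rewrite (RInt_scal (V := R_CompleteNormedModule)).
    + fold C_eta. unfold scal; simpl; unfold mult; simpl. pose proof C_eta_pos. field; lra.
    + apply ex_RInt_ext with (bump_deriv 0).
      * intros x Hx. rewrite Rmin_left, Rmax_right in Hx by lra. apply bump_deriv_0_in; lra.
      * apply ex_RInt_of_continuous, continuous_chain, bump_deriv_chain.
  - intros x Hx. rewrite Rmin_left, Rmax_right in Hx by lra.
    unfold scal; simpl; unfold mult; simpl. unfold eta_d.
    replace ((d * x + 0) / d) with x by (field; lra).
    rewrite eta_eq. unfold eta_deriv. rewrite bump_deriv_0_in by lra. simpl.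
    pose proof C_eta_pos. field; lra.
Qed.

Lemma eta_cdf_right t : d <= t -> eta_cdf d t = 1.
Proof.
  intros Ht. rewrite (eta_cdf_Chasles d t), eta_cdf_d, RInt_eq_0; [ring|].
  intros x Hx. rewrite Rmin_left, Rmax_right in Hx by lra.
  apply eta_d_out; [exact Hd|]. rewrite Rabs_right; lra.
Qed.

Lemma eta_cdf_le s t : s <= t -> eta_cdf d s <= eta_cdf d t.
Proof.
  intros Hst. rewrite (eta_cdf_Chasles s t).
  assert (0 <= RInt (eta_d d) s t); [|lra].
  apply RInt_ge_0; [exact Hst | apply ex_RInt_eta_d; lra | intros; apply eta_d_ge0, Hd].
Qed.

Lemma eta_cdf_bounds t : 0 <= eta_cdf d t <= 1.
Proof.
  split.
  - rewrite <- (eta_cdf_left (Rmin t (- d)) (Rmin_r _ _)). apply eta_cdf_le, Rmin_l.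
  - rewrite <- (eta_cdf_right (Rmax t d) (Rmax_r _ _)). apply eta_cdf_le, Rmax_l.
Qed.

Variable Rr : R.
Hypothesis HR : -1 - d <= Rr + d.

Lemma zeta_eq_cdf p : zeta Rr d p = eta_cdf d (p + 1 + d) - eta_cdf d (p - Rr - d).
Proof.
  unfold zeta.
  rewrite (RInt_ext _ (fun y => opp (scal (-1) (eta_d d (-1 * y + p))))).
  2: { intros x Hx. rewrite Rmin_left, Rmax_right in Hx by lra.
       unfold chi_Omega1. do 2 (destruct Rlt_dec; [|lra]).
       unfold opp, scal; simpl; unfold mult; simpl. replace (-1 * x + p) with (p - x) by ring.
       ring. }
  rewrite (RInt_opp (V := R_CompleteNormedModule)).
  2: { apply ex_RInt_of_continuous. intros x.
       apply (continuous_scal_r (-1) (fun y => eta_d d (-1 * y + p))).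
       apply continuous_comp; [|apply continuous_eta_d; lra].
       apply (ex_derive_continuous (fun y => -1 * y + p)). auto_derive; auto. }
  rewrite (RInt_comp_lin (V := R_CompleteNormedModule)) by (apply ex_RInt_eta_d; lra).
  replace (-1 * (-1 - d) + p) with (p + 1 + d) by ring.
  replace (-1 * (Rr + d) + p) with (p - Rr - d) by ring.
  rewrite (eta_cdf_Chasles (p + 1 + d) (p - Rr - d)).
  unfold opp; simpl. ring.
Qed.

Lemma zeta_abs_le_1 p : Rabs (zeta Rr d p) <= 1.
Proof.
  rewrite zeta_eq_cdf.
  pose proof (eta_cdf_bounds (p + 1 + d)). pose proof (eta_cdf_bounds (p - Rr - d)).
  pose proof (eta_cdf_le (p - Rr - d) (p + 1 + d) ltac:(lra)).
  rewrite Rabs_right; lra.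
Qed.

Definition zeta_deriv (k : nat) : R -> R :=
  match k with
  | O => zeta Rr d
  | S j => fun p => eta_d_deriv d j (p + 1 + d) - eta_d_deriv d j (p - Rr - d)
  end.

Lemma zeta_deriv_chain : derivative_chain zeta_deriv.
Proof.
  assert (Hshift : forall (g : R -> R) g' c x, is_derive g (x + c) g' ->
    is_derive (fun p => g (p + c)) x g').
  { intros g g' c x Hg. rewrite <- (Rmult_1_l g').
    apply (is_derive_comp g (fun p => p + c)); [exact Hg | auto_derive; auto]. }
  assert (Hdiff : forall (g g' : R -> R) x, (forall t, is_derive g t (g' t)) ->
    is_derive (fun p => g (p + 1 + d) - g (p - Rr - d)) x (g' (x + 1 + d) - g' (x - Rr - d))).
  { intros g g' x Hg.
    apply (is_derive_minus (fun p => g (p + 1 + d)) (fun p => g (p - Rr - d))).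
    - apply is_derive_ext with (fun p => g (p + (1 + d))); [intros; f_equal; ring|].
      apply Hshift. replace (x + (1 + d)) with (x + 1 + d) by ring. apply Hg.
    - apply is_derive_ext with (fun p => g (p + (- Rr - d))); [intros; f_equal; ring|].
      apply Hshift. replace (x + (- Rr - d)) with (x - Rr - d) by ring. apply Hg. }
  intros [|j] x; simpl.
  - apply is_derive_ext with (fun p => eta_cdf d (p + 1 + d) - eta_cdf d (p - Rr - d)).
    { intros t; symmetry; apply zeta_eq_cdf. }
    rewrite <- !eta_d_eq. apply Hdiff, is_derive_eta_cdf.
  - apply Hdiff. intros t. apply eta_d_deriv_chain. lra.
Qed.

Lemma zeta_deriv_out k x : x < - (1 + 2 * d) \/ Rr + 2 * d < x -> zeta_deriv k x = 0.
Proof.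
  intros Hx. destruct k as [|j]; simpl.
  - rewrite zeta_eq_cdf. destruct Hx.
    + rewrite !eta_cdf_left by lra. ring.
    + rewrite !eta_cdf_right by lra. ring.
  - destruct Hx.
    + rewrite !eta_d_deriv_out; try ring; try exact Hd; rewrite Rabs_left; lra.
    + rewrite !eta_d_deriv_out; try ring; try exact Hd; rewrite Rabs_right; lra.
Qed.

Lemma zeta_deriv_le K k x : 1 <= d -> INR K <= d -> (k <= K)%nat ->
  Rabs (zeta_deriv k x) <= 18 * (216 * d ^ 2) ^ K.
Proof.
  intros Hd1 HK Hk.
  assert (Hbase : 1 <= 216 * d ^ 2) by (simpl; nra).
  assert (H1 : 1 <= (216 * d ^ 2) ^ K) by (apply pow_R1_Rle; lra).
  destruct k as [|j]; simpl zeta_deriv; [pose proof (zeta_abs_le_1 x); lra|].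
  assert (Hj : forall s, Rabs (eta_d_deriv d j s) <= 9 * (216 * d ^ 2) ^ K).
  { intros s. eapply Rle_trans; [apply eta_d_deriv_le; [lra|]|].
    - apply le_INR in Hk. rewrite S_INR in Hk. lra.
    - apply Rmult_le_compat_l; [lra|]. apply Rle_pow; [lra|lia]. }
  eapply Rle_trans; [apply Rabs_triang|]. rewrite Rabs_Ropp.
  pose proof (Hj (x + 1 + d)). pose proof (Hj (x - Rr - d)). lra.
Qed.

End Cutoff.

Lemma is_RInt_gen_of_support (f : R -> R) a b : a <= b -> ex_RInt f a b ->
  (forall x, x < a \/ b < x -> f x = 0) ->
  is_RInt_gen f (Rbar_locally m_infty) (Rbar_locally p_infty) (RInt f a b).
Proof.
  intros Hab Hex Hz P HP.
  apply Filter_prod with (fun u => u < a) (fun v => b < v); [exists a; auto | exists b; auto|].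
  intros u v Hu Hv. exists (RInt f a b). split; [|apply locally_singleton, HP].
  assert (Hzero : forall s t, s <= t -> (forall x, s < x < t -> f x = 0) -> is_RInt f s t 0).
  { intros s t Hst Hf.
    replace 0 with (scal (t - s) 0) by (unfold scal; simpl; unfold mult; simpl; ring).
    apply is_RInt_ext with (fun _ => 0); [|exact (is_RInt_const s t 0)].
    intros x Hx. rewrite Rmin_left, Rmax_right in Hx by lra. symmetry; apply Hf; lra. }
  assert (Hleft : is_RInt f u a 0) by (apply Hzero; [lra|]; intros; apply Hz; lra).
  assert (Hright : is_RInt f b v 0) by (apply Hzero; [lra|]; intros; apply Hz; lra).
  pose proof (is_RInt_Chasles f u a v _ _ Hleft
    (is_RInt_Chasles f a b v _ _ (RInt_correct f a b Hex) Hright)) as H.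
  replace (RInt f a b) with (plus 0 (plus (RInt f a b) 0)) by (unfold plus; simpl; ring).
  exact H.
Qed.

Lemma is_RInt_exp_neg2 a b :
  is_RInt (fun x => exp (- (2 * x))) a b ((exp (- (2 * a)) - exp (- (2 * b))) / 2).
Proof.
  replace ((exp (- (2 * a)) - exp (- (2 * b))) / 2)
    with (minus (- exp (- (2 * b)) / 2) (- exp (- (2 * a)) / 2))
    by (unfold minus, plus, opp; simpl; field).
  apply (is_RInt_derive (fun x => - exp (- (2 * x)) / 2)).
  - intros x _. auto_derive; auto. field.
  - intros x _. apply (ex_derive_continuous (fun x => exp (- (2 * x)))). auto_derive; auto.
Qed.

Lemma continuous_pow2 (h : R -> R) x : continuous h x -> continuous (fun x => h x ^ 2) x.
Proof.
  intros Hc. apply (continuous_mult h (fun x => h x ^ 1)); [exact Hc|].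
  apply (continuous_mult h (fun _ => 1)); [exact Hc | apply continuous_const].
Qed.

Lemma sqrt_RInt_sq_le (h : R -> R) a b M : a <= b -> 0 <= M -> (forall x, continuous h x) ->
  (forall x, Rabs (h x) <= M * exp (- x)) ->
  sqrt (RInt (fun x => h x ^ 2) a b) <= M * exp (- a).
Proof.
  intros Hab HM Hc Hh.
  assert (Hex : ex_RInt (fun x => h x ^ 2) a b)
    by (apply ex_RInt_of_continuous; intros; apply continuous_pow2, Hc).
  assert (Hsq : forall x, h x ^ 2 <= M ^ 2 * exp (- (2 * x))).
  { intros x. replace (- (2 * x)) with (- x + - x) by ring. rewrite exp_plus, <- pow2_abs.
    pose proof (Hh x). pose proof (Rabs_pos (h x)). pose proof (exp_pos (- x)). simpl; nra. }
  assert (HI : RInt (fun x => h x ^ 2) a b <= M ^ 2 * exp (- (2 * a))).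
  { eapply Rle_trans.
    - apply (is_RInt_le _ (fun x => M ^ 2 * exp (- (2 * x))) a b _ _ Hab (RInt_correct _ _ _ Hex)).
      + apply (is_RInt_scal (fun x => exp (- (2 * x))) a b (M ^ 2)), is_RInt_exp_neg2.
      + intros x _. apply Hsq.
    - pose proof (exp_pos (- (2 * a))). pose proof (exp_pos (- (2 * b))).
      apply Rmult_le_compat_l; [apply pow2_ge_0 | lra]. }
  rewrite <- (sqrt_pow2 (M * exp (- a))) by (apply Rmult_le_pos; [lra | left; apply exp_pos]).
  apply sqrt_le_1_alt. rewrite Rpow_mult_distr, exp_pow.
  replace (INR 2 * - a) with (- (2 * a)) by (simpl; ring). exact HI.
Qed.

(* [Rpower 0 x = 1] (since [ln 0 = 0]), hence the hypothesis [1 <= K]. *)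
Lemma Rpower_inv_le (y K : R) (r : nat) : (1 <= r)%nat -> 1 <= K -> 0 <= y -> y <= K ^ r ->
  Rpower y (/ INR r) <= K.
Proof.
  intros Hr HK Hy HyK.
  assert (Hr0 : 0 < INR r) by (apply lt_0_INR; lia).
  destruct Hy as [Hy|<-].
  - eapply Rle_trans.
    + apply Rle_Rpower_l; [left; apply Rinv_0_lt_compat, Hr0 | split; [exact Hy | exact HyK]].
    + rewrite <- Rpower_pow, Rpower_mult, Rinv_r, Rpower_1 by lra. lra.
  - unfold Rpower, ln. destruct (Rlt_dec 0 0) as [H0|_]; [exfalso; lra|].
    rewrite Rmult_0_r, exp_0. exact HK.
Qed.

Definition psi_deriv (Rr d : R) (n : nat) (x : R) : R := fdiff n (zeta_deriv d Rr) x * exp (- x).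

Section Psi.

Variables Rr d : R.
Hypothesis Hd : 0 < d.
Hypothesis HR : -1 - d <= Rr + d.

Lemma psi_deriv_chain : derivative_chain (psi_deriv Rr d).
Proof. apply derivative_chain_mult_exp_neg, zeta_deriv_chain; assumption. Qed.

Lemma psi_deriv_out n x : x < - (1 + 2 * d) \/ Rr + 2 * d < x -> psi_deriv Rr d n x = 0.
Proof.
  intros Hx. unfold psi_deriv. rewrite fdiff_zero; [ring|].
  intros k. apply zeta_deriv_out; assumption.
Qed.

Lemma psi_eq_exp p : -1 < p < Rr -> psi Rr d p = exp (- p).
Proof.
  intros Hp. unfold psi. rewrite zeta_eq_cdf, eta_cdf_right, eta_cdf_left by lra. ring.
Qed.

Lemma psi_deriv_le n x : 1 <= d -> INR n <= d ->
  Rabs (psi_deriv Rr d n x) <= 18 * (432 * d ^ 2) ^ n * exp (- x).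
Proof.
  intros Hd1 Hn. unfold psi_deriv.
  rewrite Rabs_mult, (Rabs_right (exp _)) by (apply Rle_ge; left; apply exp_pos).
  apply Rmult_le_compat_r; [left; apply exp_pos|].
  replace (18 * (432 * d ^ 2) ^ n) with (2 ^ n * (18 * (216 * d ^ 2) ^ n))
    by ((replace (432 * d ^ 2) with (2 * (216 * d ^ 2)) by ring); rewrite (Rpow_mult_distr 2); ring).
  apply fdiff_bound. intros k y Hk. apply zeta_deriv_le; assumption.
Qed.

End Psi.

Lemma exp_1_plus_2n_le (n : nat) : exp (1 + 2 * INR n) <= 3 * 9 ^ n.
Proof.
  rewrite exp_plus, (Rmult_comm 2), <- exp_pow.
  apply Rmult_le_compat;
    [left; apply exp_pos | apply pow_le; left; apply exp_pos | apply exp_le_3 |].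
  apply pow_incr. split; [left; apply exp_pos | apply exp_2_le].
Qed.

Lemma psi_deriv_L2_le Rr (r : nat) : 0 < Rr -> (1 <= r)%nat ->
  sqrt (RInt (fun x => psi_deriv Rr (INR r) r x ^ 2) (- (1 + 2 * INR r)) (Rr + 2 * INR r))
  <= (54 * 3888 * INR r ^ 2) ^ r.
Proof.
  intros HR Hr. set (d := INR r).
  assert (Hd : 1 <= d) by (apply (le_INR 1); lia).
  assert (Hbase : 0 <= 3888 * d ^ 2) by (simpl; nra).
  eapply Rle_trans.
  - apply sqrt_RInt_sq_le with (M := 18 * (432 * d ^ 2) ^ r); [lra | | |].
    + apply Rmult_le_pos; [lra|]. apply pow_le. simpl; nra.
    + apply continuous_chain, psi_deriv_chain; lra.
    + intros x. apply psi_deriv_le; unfold d in *; lra.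
  - rewrite Ropp_involutive.
    apply Rle_trans with (18 * (432 * d ^ 2) ^ r * (3 * 9 ^ r)).
    { apply Rmult_le_compat_l; [|apply exp_1_plus_2n_le].
      apply Rmult_le_pos; [lra|]. apply pow_le. simpl; nra. }
    replace (18 * (432 * d ^ 2) ^ r * (3 * 9 ^ r)) with (54 * (3888 * d ^ 2) ^ r)
      by ((replace (3888 * d ^ 2) with (432 * d ^ 2 * 9) by ring); rewrite (Rpow_mult_distr (432 * d ^ 2)); ring).
    replace (54 * 3888 * d ^ 2) with (54 * (3888 * d ^ 2)) by ring.
    rewrite (Rpow_mult_distr 54).
    apply Rmult_le_compat_r; [apply pow_le; exact Hbase|].
    rewrite <- (pow_1 54) at 1. apply Rle_pow; [lra | exact Hr].
Qed.

Theorem mainTheorem2 :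
  exists C : R, 0 < C /\
  forall (Rr : R) (r : nat), 0 < Rr -> (1 <= r)%nat ->
    let d := INR r in
    let f := psi Rr d in
    (forall (n : nat) (x : R), ex_derive_n f n x) /\
    (forall p : R, f p <> 0 -> - (1 + 2 * INR r) <= p <= Rr + 2 * INR r) /\
    (forall p : R, -1 < p < Rr -> f p = exp (- p)) /\
    (exists I : R,
       is_RInt_gen (fun x => (Derive_n f r x) ^ 2)
         (Rbar_locally m_infty) (Rbar_locally p_infty) I /\
       Rpower (sqrt I) (/ INR r) <= C * INR r ^ 2).
Proof.
  exists (54 * 3888). split; [lra|].
  intros Rr r HR Hr d f.
  assert (Hd : 1 <= d) by (apply (le_INR 1); lia).
  assert (HRd : -1 - d <= Rr + d) by lra.
  pose proof (psi_deriv_chain Rr d ltac:(lra) HRd) as Hchain.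
  assert (Hf : forall x, f x = psi_deriv Rr d 0 x) by reflexivity.
  assert (HD : forall x, Derive_n f r x = psi_deriv Rr d r x) by (apply Derive_n_chain; assumption).
  split; [|split; [|split]].
  - apply (ex_derive_n_chain _ Hchain f Hf).
  - intros p Hp. split; apply Rnot_lt_le; intros Hout; apply Hp;
      rewrite Hf; apply psi_deriv_out; auto; lra.
  - apply psi_eq_exp; lra.
  - exists (RInt (fun x => Derive_n f r x ^ 2) (- (1 + 2 * d)) (Rr + 2 * d)).
    split.
    + apply is_RInt_gen_of_support; [lra | |].
      * apply ex_RInt_ext with (fun x => psi_deriv Rr d r x ^ 2); [intros; rewrite HD; reflexivity|].
        apply ex_RInt_of_continuous. intros x. apply continuous_pow2, (continuous_chain _ Hchain).
      * intros x Hx. rewrite HD, psi_deriv_out by (auto; lra). ring.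
    + rewrite (RInt_ext _ (fun x => psi_deriv Rr d r x ^ 2)) by (intros; rewrite HD; reflexivity).
      apply Rpower_inv_le; [exact Hr | | apply sqrt_pos | apply psi_deriv_L2_le; assumption].
      unfold d in Hd. simpl; nra.
Qed.
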